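(* Let $(\Omega,\mathcal A)$ be a Borel space, $(\Omega,X_\bullet)$ a Borel field of metric spaces with Borel structure $\mathcal L(\Omega,X_\bullet)$, and $\mathcal D$ a fundamental family. Then $\mathcal L(\Omega,X_\bullet)=\{y_\bullet\in\mathcal S(\Omega,X_\bullet)\mid \omega\mapsto d_\omega(y_\omega,z_\omega)\text{ is Borel for every }z_\bullet\in\mathcal D\}$ $=\{y_\bullet\in\mathcal S(\Omega,X_\bullet)\mid y_\bullet\text{ is a pointwise limit of a sequence of countable Borel gluings of elements of }\mathcal D\}.$
   Context: Borel field of metric spaces: $(X_\omega,d_\omega)_{\omega\in\Omega}$ metric spaces; a section is $x_\bullet=(x_\omega)$, $x_\omega\in X_\omega$; $\mathcal S(\Omega,X_\bullet)$ the set of sections. A Borel structure is $\mathcal L(\Omega,X_\bullet)\subseteq\mathcal S(\Omega,X_\bullet)$ such that (a) $\omega\mapsto d_\omega(x_\omega,y_\omega)$ is Borel for all $x_\bullet,y_\bullet\in\mathcal L$; (b) if $y_\bullet\in\mathcal S$ and $\omega\mapsto d_\omega(x_\omega,y_\omega)$ is Borel for all $x_\bullet\in\mathcal L$, then $y_\bullet\in\mathcal L$; (c) there is a countable family $\mathcal D=\{x^n_\bullet\}\subseteq\mathcal L$ (a fundamental family) with $\{x^n_\omega\}_n$ dense in $X_\omega$ for every $\omega$. Pointwise limit of sections: $\omega\mapsto\lim_n x^n_\omega$ when all these limits exist. Countable Borel gluing of $(x^n_\bullet)$ along a Borel partition $\Omega=\bigsqcup_n\Omega_n$: the section equal to $x^n_\omega$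 on $\Omega_n$. *)

From Stdlib Require Import Reals.
Open Scope R_scope.

Record sigma_algebra (Omega : Type) (A : (Omega -> Prop) -> Prop) : Prop := {
  sa_full  : A (fun _ => True);
  sa_compl : forall E, A E -> A (fun w => ~ E w);
  sa_union : forall E : nat -> Omega -> Prop,
      (forall n, A (E n)) -> A (fun w => exists n, E n w) }.

Definition R_open (U : R -> Prop) : Prop :=
  forall x, U x -> exists eps, 0 < eps /\ forall y, Rabs (y - x) < eps -> U y.

Definition borelR (B : R -> Prop) : Prop :=
  forall S : (R -> Prop) -> Prop,
    sigma_algebra R S -> (forall U, R_open U -> S U) -> S B.

Definition borel_fun {Omega : Type} (A : (Omega -> Prop) -> Prop)
  (f : Omega -> R) : Prop :=
  forall B, borelR B -> A (fun w => B (f w)).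

Record is_metric (X : Type) (d : X -> X -> R) : Prop := {
  met_nonneg : forall x y, 0 <= d x y;
  met_zero   : forall x y, d x y = 0 <-> x = y;
  met_sym    : forall x y, d x y = d y x;
  met_tri    : forall x y z, d x z <= d x y + d y z }.

Definition section {Omega : Type} (X : Omega -> Type) := forall w, X w.

Definition fundamental_family {Omega : Type} (X : Omega -> Type)
  (d : forall w, X w -> X w -> R) (L : section X -> Prop)
  (D : nat -> section X) : Prop :=
  (forall n, L (D n)) /\
  (forall w (x : X w) eps, 0 < eps -> exists n, d w (D n w) x < eps).

Record borel_structure {Omega : Type} (A : (Omega -> Prop) -> Prop)
  (X : Omega -> Type) (d : forall w, X w -> X w -> R)
  (L : section X -> Prop) : Prop := {
  bs_a : forall x y, L x -> L y -> borel_fun A (fun w => d w (x w) (y w));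
  bs_b : forall y : section X,
      (forall x, L x -> borel_fun A (fun w => d w (x w) (y w))) -> L y;
  bs_c : exists D, fundamental_family X d L D }.

Definition borel_partition {Omega : Type} (A : (Omega -> Prop) -> Prop)
  (P : nat -> Omega -> Prop) : Prop :=
  (forall n, A (P n)) /\
  (forall n m w, P n w -> P m w -> n = m) /\
  (forall w, exists n, P n w).

Definition is_gluing {Omega : Type} (A : (Omega -> Prop) -> Prop)
  {X : Omega -> Type} (x : nat -> section X) (P : nat -> Omega -> Prop)
  (g : section X) : Prop :=
  borel_partition A P /\ forall n w, P n w -> g w = x n w.

Definition gluing_of_family {Omega : Type} (A : (Omega -> Prop) -> Prop)
  {X : Omega -> Type} (D : nat -> section X) (g : section X) : Prop :=
  exists (k : nat -> nat) (P : nat -> Omega -> Prop),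
    is_gluing A (fun n => D (k n)) P g.

Definition pointwise_limit {Omega : Type} {X : Omega -> Type}
  (d : forall w, X w -> X w -> R) (g : nat -> section X) (y : section X) : Prop :=
  forall w eps, 0 < eps -> exists N, forall m, (N <= m)%nat -> d w (g m w) (y w) < eps.

From Stdlib Require Import Reals Lra Lia ZArith Wf_nat Classical ClassicalEpsilon
  FunctionalExtensionality PropExtensionality.
Open Scope R_scope.

(* Both descriptions of L rest on three measurability facts about real
   functions: a function is Borel as soon as its strict sublevel sets are
   measurable (open sets are countable unions of grid intervals), and hence
   Borel functions are stable under pointwise limits and under gluing along a
   Borel partition.

   - By condition (b), y lies in L iff every [d(x, y)], x in L, is Borel.  Since
     [d(x, y) < a] iff [d(x, D n) < q] and [d(y, D n) < a - q] for some n and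
     some grid point q, it suffices to know that each [d(y, D n)] is Borel.
   - L is closed under countable Borel gluings and pointwise limits (the
     distances to a fixed x glue, resp. converge).  Conversely, y in L is the
     limit of the gluings which take at w the first [D n w] within [1/(m+1)]
     of [y w]; the "first index" sets form a Borel partition. *)

Section SigmaAlgebraClosure.

Variables (Omega : Type) (A : (Omega -> Prop) -> Prop).
Hypothesis HA : sigma_algebra Omega A.

Lemma meas_ext (E F : Omega -> Prop) : A E -> (forall w, E w <-> F w) -> A F.
Proof.
  intros HE HEF. replace F with E; [exact HE|].
  apply functional_extensionality; intro w; apply propositional_extensionality, HEF.
Qed.

(* Sets defined by a condition independent of w are either empty or full. *)
Lemma meas_const (P : Prop) : A (fun _ => P).
Proof.
  destruct (classic P) as [p | np].
  - apply meas_ext with (fun _ => True); [apply (sa_full _ _ HA) | tauto].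
  - apply meas_ext with (fun _ => ~ True); [apply (sa_compl _ _ HA), (sa_full _ _ HA) | tauto].
Qed.

(* Countable intersections, obtained from unions by complementation. *)
Lemma meas_forall (E : nat -> Omega -> Prop) :
  (forall n, A (E n)) -> A (fun w => forall n, E n w).
Proof.
  intros HE. apply meas_ext with (fun w => ~ exists n, ~ E n w).
  - apply (sa_compl _ _ HA), (sa_union _ _ HA). intro n; apply (sa_compl _ _ HA), HE.
  - intro w; split.
    + intros H n. apply NNPP; intro C; apply H; eauto.
    + intros H [n C]; exact (C (H n)).
Qed.

(* Binary intersections and unions, as countable ones of [E, F, F, ...]. *)
Lemma meas_and (E F : Omega -> Prop) : A E -> A F -> A (fun w => E w /\ F w).
Proof.
  intros HE HF.
  apply meas_ext with (fun w => forall n : nat, (if Nat.eqb n 0 then E else F) w).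
  - apply meas_forall; intros [|n]; assumption.
  - intro w; split.
    + intros H; exact (conj (H 0%nat) (H 1%nat)).
    + intros [e f] [|n]; assumption.
Qed.

Lemma meas_or (E F : Omega -> Prop) : A E -> A F -> A (fun w => E w \/ F w).
Proof.
  intros HE HF.
  apply meas_ext with (fun w => exists n : nat, (if Nat.eqb n 0 then E else F) w).
  - apply (sa_union _ _ HA); intros [|n]; assumption.
  - intro w; split.
    + intros [[|n] H]; [left | right]; exact H.
    + intros [e | f]; [exists 0%nat | exists 1%nat]; assumption.
Qed.

Lemma meas_const_imp (P : Prop) (E : Omega -> Prop) : A E -> A (fun w => P -> E w).
Proof.
  intros HE. apply meas_ext with (fun w => ~ P \/ E w).
  - apply meas_or; [apply meas_const | exact HE].
  - intro w; split; [tauto | intros H; destruct (classic P); tauto].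
Qed.

End SigmaAlgebraClosure.

(* The countable grid [(i - j) / (k + 1)], i.e. the rationals indexed by nat^3. *)
Definition grid (i j k : nat) : R := (INR i - INR j) / INR (S k).

Lemma inv_succ_pos (m : nat) : 0 < / INR (S m).
Proof. apply Rinv_0_lt_compat, lt_0_INR; lia. Qed.

Lemma inv_succ_small (eps : R) : 0 < eps -> exists m, / INR (S m) < eps.
Proof.
  intros Heps. destruct (archimed_cor1 eps Heps) as [N [HN HN0]].
  exists (N - 1)%nat. replace (S (N - 1)) with N by lia. exact HN.
Qed.

Lemma inv_succ_antitone (m n : nat) : (n <= m)%nat -> / INR (S m) <= / INR (S n).
Proof. intros Hnm. apply Rinv_le_contravar; [apply lt_0_INR; lia | apply le_INR; lia]. Qed.

Lemma IZR_as_nat_difference (z : Z) : exists i j, IZR z = INR i - INR j.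
Proof.
  destruct (Z.le_ge_cases 0 z) as [Hz | Hz].
  - exists (Z.to_nat z), O. rewrite (INR_IZR_INZ (Z.to_nat z)), Z2Nat.id by lia. simpl; lra.
  - exists O, (Z.to_nat (- z)). rewrite (INR_IZR_INZ (Z.to_nat (- z))), Z2Nat.id by lia.
    rewrite opp_IZR. simpl; lra.
Qed.

(* The grid meets every nonempty open interval: take the smallest multiple of
   [1/(k+1)] above [a], with [1/(k+1) < b - a]. *)
Lemma grid_dense (a b : R) : a < b -> exists i j k, a < grid i j k < b.
Proof.
  intros Hab. destruct (inv_succ_small (b - a)) as [k Hk]; [lra|].
  set (N := INR (S k)) in *.
  assert (HN : 0 < N) by (apply lt_0_INR; lia).
  destruct (archimed (a * N)) as [Hup1 Hup2].
  destruct (IZR_as_nat_difference (up (a * N))) as [i [j Hij]].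
  exists i, j, k. unfold grid. fold N. rewrite <- Hij.
  assert (HNN : / N * N = 1) by (field; lra).
  split; apply Rmult_lt_reg_r with N; auto; unfold Rdiv; rewrite Rmult_assoc, HNN.
  - lra.
  - assert (/ N * N < (b - a) * N) by (apply Rmult_lt_compat_r; auto). lra.
Qed.

Section BorelFunctions.

Variables (Omega : Type) (A : (Omega -> Prop) -> Prop).
Hypothesis HA : sigma_algebra Omega A.

Lemma borel_fun_sublevel (f : Omega -> R) (a : R) :
  borel_fun A f -> A (fun w => f w < a).
Proof.
  intros Hf. apply (Hf (fun x => x < a)). intros S _ Hopen. apply Hopen.
  intros x Hx. exists (a - x). split; [lra|].
  intros y Hy. apply Rabs_def2 in Hy. lra.
Qed.

(* Conversely, measurable strict sublevel sets make f Borel: the sets B with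
   measurable preimage form a sigma-algebra, and it contains every open set, an
   open set being the union of the grid intervals it contains. *)
Lemma borel_fun_of_sublevels (f : Omega -> R) :
  (forall a, A (fun w => f w < a)) -> borel_fun A f.
Proof.
  intros Hlt B HB. apply (HB (fun B => A (fun w => B (f w)))).
  - split.
    + exact (sa_full _ _ HA).
    + intros E HE; exact (sa_compl _ _ HA _ HE).
    + intros E HE; exact (sa_union _ _ HA (fun n w => E n (f w)) HE).
  - intros U HU.
    assert (Hgt : forall a, A (fun w => a < f w)).
    { intro a. apply meas_ext with (fun w => exists n, ~ f w < a + / INR (S n)).
      - apply (sa_union _ _ HA). intro n; exact (sa_compl _ _ HA _ (Hlt _)).
      - intro w; split.
        + intros [n Hn]. pose proof (inv_succ_pos n). lra.
        + intros Hgt. destruct (inv_succ_small (f w - a)) as [n Hn]; [lra|].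
          exists n. lra. }
    apply meas_ext with (fun w => exists i1 j1 k1 i2 j2 k2,
       (forall x, grid i1 j1 k1 < x < grid i2 j2 k2 -> U x) /\
       (grid i1 j1 k1 < f w /\ f w < grid i2 j2 k2)).
    + do 6 (apply (sa_union _ _ HA); intro).
      apply (meas_and _ _ HA); [apply (meas_const _ _ HA) | apply (meas_and _ _ HA)].
      * apply Hgt.
      * apply Hlt.
    + intro w; split.
      * intros (i1 & j1 & k1 & i2 & j2 & k2 & Hsub & Hin). exact (Hsub _ Hin).
      * intros Hw. destruct (HU _ Hw) as [eps [Heps Hball]].
        destruct (grid_dense (f w - eps) (f w)) as (i1 & j1 & k1 & Hq1); [lra|].
        destruct (grid_dense (f w) (f w + eps)) as (i2 & j2 & k2 & Hq2); [lra|].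
        exists i1, j1, k1, i2, j2, k2. split; [|lra].
        intros x Hx. apply Hball, Rabs_def1; lra.
Qed.

(* A pointwise limit of Borel functions is Borel:
   [F w < a] iff eventually [f m w < a - 1/(j+1)] for some j. *)
Lemma borel_fun_limit (f : nat -> Omega -> R) (F : Omega -> R) :
  (forall m, borel_fun A (f m)) ->
  (forall w eps, 0 < eps -> exists N, forall m, (N <= m)%nat -> Rabs (f m w - F w) < eps) ->
  borel_fun A F.
Proof.
  intros Hf Hcv. apply borel_fun_of_sublevels. intro a.
  apply meas_ext with
    (fun w => exists j N, forall m, (N <= m)%nat -> f m w < a - / INR (S j)).
  - do 2 (apply (sa_union _ _ HA); intro).
    apply (meas_forall _ _ HA); intro m.
    apply (meas_const_imp _ _ HA), borel_fun_sublevel, Hf.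
  - intro w; split.
    + intros (j & N & Hev). destruct (Hcv w (/ INR (S j)) (inv_succ_pos j)) as [N' HN'].
      specialize (Hev (max N N') ltac:(lia)). specialize (HN' (max N N') ltac:(lia)).
      apply Rabs_def2 in HN'. lra.
    + intros Hw. destruct (inv_succ_small ((a - F w) / 2)) as [j Hj]; [lra|].
      destruct (Hcv w ((a - F w) / 2)) as [N HN]; [lra|].
      exists j, N. intros m Hm. specialize (HN m Hm). apply Rabs_def2 in HN. lra.
Qed.

Lemma borel_fun_glue (P : nat -> Omega -> Prop) (h : nat -> Omega -> R) (F : Omega -> R) :
  borel_partition A P -> (forall n, borel_fun A (h n)) ->
  (forall n w, P n w -> F w = h n w) -> borel_fun A F.
Proof.
  intros (HP & _ & Hcover) Hh Hagree. apply borel_fun_of_sublevels. intro a.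
  apply meas_ext with (fun w => exists n, P n w /\ h n w < a).
  - apply (sa_union _ _ HA); intro n.
    apply (meas_and _ _ HA); [apply HP | apply borel_fun_sublevel, Hh].
  - intro w; split.
    + intros (n & Hn & Hlt). rewrite (Hagree n w Hn). exact Hlt.
    + intros Hlt. destruct (Hcover w) as [n Hn]. exists n.
      rewrite <- (Hagree n w Hn). auto.
Qed.

End BorelFunctions.

Section MetricFacts.

Variables (X : Type) (d : X -> X -> R).
Hypothesis Hd : is_metric X d.

Lemma dist_reverse_triangle (x y z : X) : Rabs (d x z - d x y) <= d z y.
Proof.
  pose proof (met_tri _ _ Hd x y z). pose proof (met_tri _ _ Hd x z y).
  rewrite (met_sym _ _ Hd y z) in *. apply Rabs_le; lra.
Qed.

Lemma dist_lt_through_dense (s : nat -> X) (x y : X) (a : R) :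
  (forall z eps, 0 < eps -> exists n, d (s n) z < eps) ->
  d x y < a <->
  exists n i j k, d x (s n) < grid i j k /\ d y (s n) < a - grid i j k.
Proof.
  intros Hs. split.
  - intros Hxy. set (delta := a - d x y).
    destruct (Hs y (delta / 3)) as [n Hn]; [unfold delta; lra|].
    rewrite (met_sym _ _ Hd) in Hn.
    pose proof (met_tri _ _ Hd x y (s n)).
    destruct (grid_dense (d x y + delta / 3) (d x y + 2 * delta / 3))
      as (i & j & k & Hq); [unfold delta; lra|].
    exists n, i, j, k. unfold delta in *. split; lra.
  - intros (n & i & j & k & Hx & Hy).
    pose proof (met_tri _ _ Hd x (s n) y). rewrite (met_sym _ _ Hd (s n) y) in *. lra.
Qed.

End MetricFacts.

Section Gluings.

Variables (Omega : Type) (A : (Omega -> Prop) -> Prop) (X : Omega -> Type).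
Hypothesis HA : sigma_algebra Omega A.

Lemma first_index_partition (Q : nat -> Omega -> Prop) :
  (forall n, A (Q n)) -> (forall w, exists n, Q n w) ->
  borel_partition A (fun n w => Q n w /\ forall j, (j < n)%nat -> ~ Q j w).
Proof.
  intros HQ Hcover. split; [|split].
  - intro n. apply (meas_and _ _ HA); [apply HQ|].
    apply (meas_forall _ _ HA); intro j.
    apply (meas_const_imp _ _ HA), (sa_compl _ _ HA), HQ.
  - intros n m w [Hn Hn_first] [Hm Hm_first].
    destruct (lt_eq_lt_dec n m) as [[Hlt | Heq] | Hlt]; [| exact Heq |].
    + exfalso; exact (Hm_first n Hlt Hn).
    + exfalso; exact (Hn_first m Hlt Hm).
  - intro w.
    destruct (dec_inh_nat_subset_has_unique_least_element (fun n => Q n w)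
                (fun n => classic (Q n w)) (Hcover w)) as [n [[Hn Hleast] _]].
    exists n. split; [exact Hn|]. intros j Hj Qj. specialize (Hleast j Qj). lia.
Qed.

Lemma gluing_exists (x : nat -> section X) (P : nat -> Omega -> Prop) :
  borel_partition A P -> exists g, is_gluing A x P g.
Proof.
  intros HP. pose proof HP as (_ & Hdisj & Hcover).
  destruct (choice (fun w n => P n w) Hcover) as [idx Hidx].
  exists (fun w => x (idx w) w). split; [exact HP|].
  intros n w Hn. rewrite (Hdisj _ _ _ (Hidx w) Hn). reflexivity.
Qed.

End Gluings.

Section BorelStructure.

Variables (Omega : Type) (A : (Omega -> Prop) -> Prop) (X : Omega -> Type)
  (d : forall w, X w -> X w -> R) (L : section X -> Prop).
Hypothesis HA : sigma_algebra Omega A.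
Hypothesis Hmet : forall w, is_metric (X w) (d w).
Hypothesis HL : borel_structure A X d L.

(* First description of L: it suffices to test condition (b) against a
   fundamental family, since [d(x, y) < a] is a countable union of conditions
   on [d(x, D n)] and [d(y, D n)]. *)
Lemma in_L_iff_dist_to_family (D : nat -> section X) (y : section X) :
  fundamental_family X d L D ->
  L y <-> (forall n, borel_fun A (fun w => d w (y w) (D n w))).
Proof.
  intros [HDL HDdense]. split.
  - intros Ly n. exact (bs_a _ _ _ _ HL y (D n) Ly (HDL n)).
  - intros Hy. apply (bs_b _ _ _ _ HL). intros x Lx.
    apply (borel_fun_of_sublevels _ _ HA). intro a.
    apply meas_ext with (fun w => exists n i j k,
        d w (x w) (D n w) < grid i j k /\ d w (y w) (D n w) < a - grid i j k).
    + do 4 (apply (sa_union _ _ HA); intro).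
      apply (meas_and _ _ HA); apply borel_fun_sublevel; [|apply Hy].
      exact (bs_a _ _ _ _ HL x (D _) Lx (HDL _)).
    + intro w. symmetry.
      apply (dist_lt_through_dense _ _ (Hmet w) (fun n => D n w)), HDdense.
Qed.

Lemma gluing_in_L (x : nat -> section X) (P : nat -> Omega -> Prop) (g : section X) :
  (forall n, L (x n)) -> is_gluing A x P g -> L g.
Proof.
  intros Lx [HP Hg]. apply (bs_b _ _ _ _ HL). intros z Lz.
  apply (borel_fun_glue _ _ HA P (fun n w => d w (z w) (x n w))); [exact HP | |].
  - intro n. exact (bs_a _ _ _ _ HL z (x n) Lz (Lx n)).
  - intros n w Hn. rewrite (Hg n w Hn). reflexivity.
Qed.

(* L is closed under pointwise limits: distances to [g m] converge to
   distances to the limit, by the reverse triangle inequality. *)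
Lemma limit_in_L (g : nat -> section X) (y : section X) :
  (forall m, L (g m)) -> pointwise_limit d g y -> L y.
Proof.
  intros Lg Hlim. apply (bs_b _ _ _ _ HL). intros x Lx.
  apply (borel_fun_limit _ _ HA (fun m w => d w (x w) (g m w))).
  - intro m. exact (bs_a _ _ _ _ HL x (g m) Lx (Lg m)).
  - intros w eps Heps. destruct (Hlim w eps Heps) as [N HN]. exists N.
    intros m Hm. eapply Rle_lt_trans; [apply dist_reverse_triangle, Hmet | exact (HN m Hm)].
Qed.

(* Every element of L is the pointwise limit of gluings of D: the m-th gluing
   takes at w the first [D n w] within [1/(m+1)] of [y w]. *)
Lemma approximation_by_gluings (D : nat -> section X) (y : section X) :
  fundamental_family X d L D -> L y ->
  exists g : nat -> section X,
    (forall m, gluing_of_family A D (g m)) /\ pointwise_limit d g y.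
Proof.
  intros [HDL HDdense] Ly.
  set (close m n w := d w (D n w) (y w) < / INR (S m)).
  set (P m := fun n w => close m n w /\ forall j, (j < n)%nat -> ~ close m j w).
  assert (HP : forall m, borel_partition A (P m)).
  { intro m. apply (first_index_partition _ _ HA (close m)).
    - intro n. exact (borel_fun_sublevel _ _ _ _ (bs_a _ _ _ _ HL (D n) y (HDL n) Ly)).
    - intro w. exact (HDdense w (y w) _ (inv_succ_pos m)). }
  destruct (choice (fun m g => is_gluing A D (P m) g)
              (fun m => gluing_exists _ _ _ D (P m) (HP m))) as [g Hg].
  exists g. split.
  - intro m. exists (fun n => n), (P m). exact (Hg m).
  - intros w eps Heps. destruct (inv_succ_small eps Heps) as [N HN]. exists N.
    intros m Hm. destruct (proj2 (HP m)) as [_ Hcover]. destruct (Hcover w) as [n Hn].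
    rewrite (proj2 (Hg m) n w Hn).
    destruct Hn as [Hclose _]. unfold close in Hclose.
    pose proof (inv_succ_antitone m N Hm). lra.
Qed.

End BorelStructure.

Theorem mainTheorem3 (Omega : Type) (A : (Omega -> Prop) -> Prop)
  (X : Omega -> Type) (d : forall w, X w -> X w -> R)
  (L : section X -> Prop) (D : nat -> section X)
  (HA : sigma_algebra Omega A)
  (Hmet : forall w, is_metric (X w) (d w))
  (HL : borel_structure A X d L)
  (HD : fundamental_family X d L D) :
  (forall y : section X,
     L y <-> (forall n, borel_fun A (fun w => d w (y w) (D n w)))) /\
  (forall y : section X,
     L y <-> exists g : nat -> section X,
               (forall m, gluing_of_family A D (g m)) /\ pointwise_limit d g y).
Proof.
  split; intro y.
  - exact (in_L_iff_dist_to_family _ _ _ _ _ HA Hmet HL D y HD).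
  - split.
    + exact (approximation_by_gluings _ _ _ _ _ HA HL D y HD).
    + intros (g & Hglue & Hlim).
      apply (limit_in_L _ _ _ _ _ HA Hmet HL g y); [intro m | exact Hlim].
      destruct (Hglue m) as (k & P & Hg).
      apply (gluing_in_L _ _ _ _ _ HA HL (fun n => D (k n)) P); [|exact Hg].
      intro n; apply (proj1 HD).
Qed.
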